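(* Let $\hat x=(\dots,x_2,x_1)\in\mathrm{Im}(\Psi^+)$ satisfy $x_m\le p_m$ for all $m\ge1$, and let $k\ge1$. The following are equivalent: (1) $c'_{2l+i_k}(x_{k+1}-p_{k+1})-c'_{2l+i_k-1}(x_k-p_k)\le0$ for all $l\ge1$; (2) $\gamma_{k+1}p_{k+1}-p_k+x_k-\gamma_{k+1}x_{k+1}\ge0$.
   Context: Let $a_1,a_2\in\mathbb Z_{\ge1}$ with $a_1a_2>4$, $A=\begin{pmatrix}2&-a_1\\-a_2&2\end{pmatrix}$, $\mathfrak g=\mathfrak g(A)$ with simple roots $\alpha_1,\alpha_2$, coroots $\alpha_i^\vee$, fundamental weights $\Lambda_1,\Lambda_2$. For $k\in\mathbb Z$, $i_k=1$ if $k$ odd, $i_k=2$ if $k$ even (so $i_k\in\{1,2\}$ is also used as an integer). $\mathbb Z^{+\infty}_{\ge0}$ is the set of sequences $(\dots,x_2,x_1)$ of nonnegative integers, almost all zero, with the Nakashima–Zelevinsky crystal structure for the sequence $(\dots,i_2,i_1)$, and $\Psi^+:\mathcal B(\infty)\hookrightarrow\mathbb Z^{+\infty}_{\ge0}$ the corresponding crystal embedding of the crystal basis of $U_q^-(\mathfrak g)$ (sending the highest element to the zero sequence). Put $\alpha=\frac{a_1a_2+\sqrt{a_1^2a_2^2-4a_1a_2}}{2a_2}$, $\beta=\frac{a_1a_2+\sqrt{a_1^2a_2^2-4a_1a_2}}{2a_1}$, $\gamma_k=\alpha$ ($k$ even), $\beta$ ($k$ odd). Fix $\lambda=k_1\Lambda_1-k_2\Lambda_2$,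 $k_1,k_2\in\mathbb Z_{>0}$, with: if $a_1,a_2\ge2$, $k_2\le k_1<(a_1-1)k_2$ or $k_1<k_2\le(a_2-1)k_1$; if $a_1=1$, $2k_1\le k_2\le(a_2-2)k_1$; if $a_2=1$, $2k_2\le k_1\le(a_1-2)k_2$. Let $p_0=k_2$, $p_1=k_1$, $p_{m+2}=a_2p_{m+1}-p_m$ ($m\ge0$ even), $p_{m+2}=a_1p_{m+1}-p_m$ ($m\ge0$ odd). Define $c'_0=0$, $c'_1=1$, $c'_{j+2}=a_2c'_{j+1}-c'_j$ ($j$ even), $c'_{j+2}=a_1c'_{j+1}-c'_j$ ($j$ odd). *)

From Stdlib Require Import Reals ZArith Arith List Lia.
Import ListNotations.
Open Scope Z_scope.

Definition ik (k : nat) : nat := if Nat.odd k then 1%nat else 2%nat.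

Definition cartan (a1 a2 : nat) (i j : nat) : Z :=
  if Nat.eqb i j then 2
  else if Nat.eqb i 1 then - Z.of_nat a1 else - Z.of_nat a2.

Definition sum_range (f : nat -> Z) (lo hi : nat) : Z :=
  fold_right Z.add 0 (map f (seq lo (hi - lo))).

(* Sequences (..., x_2, x_1) are functions nat -> nat; index 0 is unused. *)
Definition finsupp (x : nat -> nat) (N : nat) : Prop :=
  forall j, (N < j)%nat -> x j = 0%nat.

(* Nakashima-Zelevinsky sigma_k(x) = x_k + sum_{j>k} <h_{i_k}, alpha_{i_j}> x_j,
   computed with a bound N of the support of x (value independent of N). *)
Definition sigmaNZ (a1 a2 : nat) (x : nat -> nat) (N k : nat) : Z :=
  Z.of_nat (x k) +
  sum_range (fun j => cartan a1 a2 (ik k) (ik j) * Z.of_nat (x j)) (S k) (S N).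

(* Kashiwara operator f~_i of the NZ crystal structure on Z^{+oo}_{>=0}:
   y = f~_i x iff y = x + 1 at position m_f = min M^{(i)}, where
   M^{(i)} = {k : i_k = i, sigma_k(x) = max_{l : i_l = i} sigma_l(x)}. *)
Definition ftilde (a1 a2 : nat) (i : nat) (x y : nat -> nat) : Prop :=
  exists m N : nat,
    (1 <= m)%nat /\ ik m = i /\ finsupp x N /\
    (forall k, (1 <= k)%nat -> ik k = i -> sigmaNZ a1 a2 x N k <= sigmaNZ a1 a2 x N m) /\
    (forall k, (1 <= k < m)%nat -> ik k = i -> sigmaNZ a1 a2 x N k < sigmaNZ a1 a2 x N m) /\
    y = (fun j => if Nat.eqb j m then S (x j) else x j).

(* Im(Psi^+): since B(infinity) is generated from its highest element by the
   f~_i and Psi^+ is a strict crystal embedding sending it to the zero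
   sequence, the image is the set of sequences obtained from 0 by applying
   f~_1, f~_2. *)
Inductive ImPsi (a1 a2 : nat) : (nat -> nat) -> Prop :=
| ImPsi_zero : ImPsi a1 a2 (fun _ => 0%nat)
| ImPsi_f : forall i x y, (i = 1 \/ i = 2)%nat -> ImPsi a1 a2 x ->
    ftilde a1 a2 i x y -> ImPsi a1 a2 y.

Definition rcoef (a1 a2 : nat) (m : nat) : Z :=
  if Nat.even m then Z.of_nat a2 else Z.of_nat a1.

Fixpoint rec_pair (a1 a2 : nat) (s0 s1 : Z) (n : nat) : Z * Z :=
  match n with
  | O => (s0, s1)
  | S n' => let (u, v) := rec_pair a1 a2 s0 s1 n' in (v, rcoef a1 a2 n' * v - u)
  end.

Definition pseq (a1 a2 k1 k2 : nat) (m : nat) : Z :=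
  fst (rec_pair a1 a2 (Z.of_nat k2) (Z.of_nat k1) m).

Definition cprime (a1 a2 : nat) (j : nat) : Z :=
  fst (rec_pair a1 a2 0 1 j).

Open Scope R_scope.

Definition alphaR (a1 a2 : nat) : R :=
  (INR a1 * INR a2 + sqrt (INR a1 ^ 2 * INR a2 ^ 2 - 4 * INR a1 * INR a2)) / (2 * INR a2).
Definition betaR (a1 a2 : nat) : R :=
  (INR a1 * INR a2 + sqrt (INR a1 ^ 2 * INR a2 ^ 2 - 4 * INR a1 * INR a2)) / (2 * INR a1).
Definition gammaR (a1 a2 : nat) (k : nat) : R :=
  if Nat.even k then alphaR a1 a2 else betaR a1 a2.

(* Write u = x_{k+1} - p_{k+1} <= 0, v = x_k - p_k <= 0 and m = 2l + i_k - 1, an index of the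
   parity of k+1, so that gamma_m = gamma_{k+1}.  With the gap D_m = c'_{m+1} - gamma_m c'_m,
   the quantity in (1) is c'_m (gamma_{k+1} u - v) + D_m u.  Since alpha and beta satisfy
   (r_j - gamma_{j+1}) gamma_j = 1, where r_j is the coefficient of the recursion for c',
   we get D_j = gamma_j D_{j+1}: the gap is positive and shrinks by the factor alpha beta > 1
   every two steps, while c' grows at least like (alpha beta)^(m/2).  Hence (2) makes every
   term of (1) nonpositive, and if (2) failed the first summand would eventually dominate
   the bounded second one. *)

From Stdlib Require Import Reals ZArith Arith List Lia.
From Stdlib Require Import Lra Psatz.

Open Scope R_scope.

Section SecondOrderRecurrence.

Variables (c g r : nat -> R) (G : R).
Hypotheses (c_0 : c 0%nat = 0) (c_1 : c 1%nat = 1)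
  (c_rec : forall j, c (S (S j)) = r j * c (S j) - c j)
  (g_rec : forall j, (r j - g (S j)) * g j = 1)
  (g_pos : forall j, 0 < g j)
  (g_mul_S : forall j, g j * g (S j) = G)
  (G_gt1 : 1 < G).

Definition gap j := c (S j) - g j * c j.

Lemma gap_S j : g j * gap (S j) = gap j.
Proof.
  unfold gap. rewrite c_rec.
  transitivity ((r j - g (S j)) * g j * c (S j) - g j * c j); [ring|].
  rewrite g_rec. ring.
Qed.

Lemma gap_pos j : 0 < gap j.
Proof.
  induction j as [|j IH].
  - unfold gap. rewrite c_0, c_1. lra.
  - pose proof (gap_S j). pose proof (g_pos j). nra.
Qed.

Lemma gap_SS_le j : gap (S (S j)) <= gap j.
Proof.
  assert (HG : G * gap (S (S j)) = gap j).
  { rewrite <- (gap_S j), <- (gap_S (S j)), <- (g_mul_S j). ring. }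
  pose proof (gap_pos (S (S j))). nra.
Qed.

Lemma gap_le_max j : gap j <= Rmax (gap 0) (gap 1).
Proof.
  enough (H : forall n, gap n <= Rmax (gap 0) (gap 1) /\ gap (S n) <= Rmax (gap 0) (gap 1))
    by apply H.
  induction n as [|n [IH IHS]].
  - split; [apply Rmax_l | apply Rmax_r].
  - split; [exact IHS|]. pose proof (gap_SS_le n). lra.
Qed.

Lemma c_nonneg j : 0 <= c j.
Proof.
  induction j as [|j IH].
  - rewrite c_0. lra.
  - pose proof (gap_pos j). pose proof (g_pos j). unfold gap in *. nra.
Qed.

Lemma c_pos j : (1 <= j)%nat -> 0 < c j.
Proof.
  intros hj. destruct j as [|j]; [lia|].
  pose proof (gap_pos j). pose proof (c_nonneg j). pose proof (g_pos j).
  unfold gap in *. nra.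
Qed.

Lemma c_SS_ge j : G * c j <= c (S (S j)).
Proof.
  pose proof (gap_pos j). pose proof (gap_pos (S j)). pose proof (g_pos (S j)).
  pose proof (g_mul_S j). pose proof (c_nonneg j). unfold gap in *. nra.
Qed.

Lemma c_add_double_ge j n : c j + INR n * (G - 1) * c j <= c (j + 2 * n)%nat.
Proof.
  induction n as [|n IH].
  - rewrite Nat.add_0_r. simpl. lra.
  - replace (j + 2 * S n)%nat with (S (S (j + 2 * n))) by lia.
    pose proof (c_SS_ge (j + 2 * n)). pose proof (c_nonneg j). pose proof (pos_INR n).
    assert (0 <= INR n * (G - 1) * c j) by (apply Rmult_le_pos; nra).
    rewrite S_INR. nra.
Qed.

Lemma c_unbounded j B : (1 <= j)%nat -> exists n, B < c (j + 2 * n)%nat.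
Proof.
  intros hj. pose proof (c_pos j hj).
  destruct (INR_archimed ((G - 1) * c j) B) as [n Hn]; [apply Rmult_lt_0_compat; lra|].
  exists n. pose proof (c_add_double_ge j n). nra.
Qed.

Lemma g_add_double j n : g (j + 2 * n)%nat = g j.
Proof.
  induction n as [|n IH]; [now rewrite Nat.add_0_r|].
  replace (j + 2 * S n)%nat with (S (S (j + 2 * n))) by lia.
  rewrite <- IH. set (i := (j + 2 * n)%nat).
  pose proof (g_mul_S i). pose proof (g_mul_S (S i)). pose proof (g_pos (S i)).
  apply (Rmult_eq_reg_l (g (S i))); lra.
Qed.

Theorem combination_nonpos_iff j u v : (1 <= j)%nat -> u <= 0 ->
  (forall n, c (S (j + 2 * n)) * u - c (j + 2 * n)%nat * v <= 0) <-> g j * u - v <= 0.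
Proof.
  intros hj hu.
  assert (decomp : forall n, c (S (j + 2 * n)) * u - c (j + 2 * n)%nat * v
                             = c (j + 2 * n)%nat * (g j * u - v) + gap (j + 2 * n) * u).
  { intros n. unfold gap. rewrite g_add_double. ring. }
  split.
  - intros H. destruct (Rle_lt_dec (g j * u - v) 0) as [Hle|Hgt]; [exact Hle|].
    exfalso.
    set (M := Rmax (gap 0) (gap 1)).
    destruct (c_unbounded j (- M * u / (g j * u - v)) hj) as [n Hn].
    set (m := (j + 2 * n)%nat) in Hn.
    assert (Hc : - M * u < c m * (g j * u - v)).
    { apply (Rmult_lt_compat_r (g j * u - v)) in Hn; [|lra].
      unfold Rdiv in Hn. rewrite Rmult_assoc, Rinv_l in Hn by lra. lra. }
    assert (Hgap : M * u <= gap m * u)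
      by (pose proof (gap_le_max m) as HM; fold M in HM; nra).
    pose proof (H n) as Hn'. rewrite decomp in Hn'. fold m in Hn'. lra.
  - intros H n. rewrite (decomp n).
    pose proof (c_nonneg (j + 2 * n)). pose proof (gap_pos (j + 2 * n)). nra.
Qed.

End SecondOrderRecurrence.

Section AlphaBeta.

Variables a1 a2 : nat.
Hypotheses (ha1 : (1 <= a1)%nat) (ha2 : (1 <= a2)%nat) (ha12 : (4 < a1 * a2)%nat).

Lemma alphaR_betaR_spec :
  0 < alphaR a1 a2 /\ 0 < betaR a1 a2 /\ 1 < alphaR a1 a2 * betaR a1 a2 /\
  (INR a2 - betaR a1 a2) * alphaR a1 a2 = 1 /\ (INR a1 - alphaR a1 a2) * betaR a1 a2 = 1.
Proof.
  assert (H1 : 1 <= INR a1) by (apply (le_INR 1) in ha1; simpl in ha1; lra).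
  assert (H2 : 1 <= INR a2) by (apply (le_INR 1) in ha2; simpl in ha2; lra).
  assert (H12 : 4 < INR a1 * INR a2).
  { rewrite <- mult_INR. replace 4 with (INR 4) by (simpl; lra). now apply lt_INR. }
  unfold alphaR, betaR.
  set (A1 := INR a1) in *. set (A2 := INR a2) in *.
  set (s := sqrt (A1 ^ 2 * A2 ^ 2 - 4 * A1 * A2)).
  assert (hs0 : 0 <= s) by apply sqrt_pos.
  assert (hs : s * s = A1 ^ 2 * A2 ^ 2 - 4 * A1 * A2) by (apply sqrt_sqrt; nra).
  repeat split.
  - apply Rdiv_lt_0_compat; lra.
  - apply Rdiv_lt_0_compat; lra.
  - replace ((A1 * A2 + s) / (2 * A2) * ((A1 * A2 + s) / (2 * A1)))
      with ((A1 * A2 + s) * (A1 * A2 + s) / (4 * (A1 * A2))) by (field; lra).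
    apply Rmult_lt_reg_r with (4 * (A1 * A2)); [lra|].
    unfold Rdiv. rewrite Rmult_assoc, Rinv_l by lra. nra.
  - field_simplify; [|lra]. replace (s ^ 2) with (s * s) by ring. rewrite hs. field. lra.
  - field_simplify; [|lra]. replace (s ^ 2) with (s * s) by ring. rewrite hs. field. lra.
Qed.

Lemma gammaR_pos j : 0 < gammaR a1 a2 j.
Proof.
  destruct alphaR_betaR_spec as (ha & hb & _).
  unfold gammaR. now destruct (Nat.even j).
Qed.

Lemma gammaR_mul_S j : gammaR a1 a2 j * gammaR a1 a2 (S j) = alphaR a1 a2 * betaR a1 a2.
Proof.
  unfold gammaR. rewrite Nat.even_succ, <- Nat.negb_even.
  destruct (Nat.even j); simpl; ring.
Qed.

Lemma gammaR_rcoef j : (IZR (rcoef a1 a2 j) - gammaR a1 a2 (S j)) * gammaR a1 a2 j = 1.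
Proof.
  destruct alphaR_betaR_spec as (_ & _ & _ & e2 & e1).
  unfold gammaR, rcoef. rewrite Nat.even_succ, <- Nat.negb_even.
  destruct (Nat.even j); simpl; rewrite <- INR_IZR_INZ; assumption.
Qed.

End AlphaBeta.

Close Scope R_scope.

Lemma rec_pair_fst_SS a1 a2 s0 s1 n :
  fst (rec_pair a1 a2 s0 s1 (S (S n))) =
  rcoef a1 a2 n * fst (rec_pair a1 a2 s0 s1 (S n)) - fst (rec_pair a1 a2 s0 s1 n).
Proof. simpl. now destruct (rec_pair a1 a2 s0 s1 n). Qed.

Lemma cprime_SS a1 a2 j :
  cprime a1 a2 (S (S j)) = rcoef a1 a2 j * cprime a1 a2 (S j) - cprime a1 a2 j.
Proof. apply rec_pair_fst_SS. Qed.

Lemma cprime_combination_nonpos_iff a1 a2 j (u v : R) :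
  (1 <= a1)%nat -> (1 <= a2)%nat -> (4 < a1 * a2)%nat -> (1 <= j)%nat -> (u <= 0)%R ->
  (forall n, IZR (cprime a1 a2 (S (j + 2 * n))) * u - IZR (cprime a1 a2 (j + 2 * n)) * v <= 0)%R
  <-> (gammaR a1 a2 j * u - v <= 0)%R.
Proof.
  intros ha1 ha2 ha12.
  destruct (alphaR_betaR_spec a1 a2 ha1 ha2 ha12) as (_ & _ & hG & _).
  apply (combination_nonpos_iff (fun j => IZR (cprime a1 a2 j)) (gammaR a1 a2)
           (fun j => IZR (rcoef a1 a2 j)) (alphaR a1 a2 * betaR a1 a2));
    try reflexivity; auto using gammaR_rcoef, gammaR_pos, gammaR_mul_S.
  intros i. now rewrite cprime_SS, minus_IZR, mult_IZR.
Qed.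

Lemma cprime_condition_reindex a1 a2 k (X Y : Z) :
  (forall l : nat, (1 <= l)%nat ->
     cprime a1 a2 (2 * l + ik k) * X - cprime a1 a2 (2 * l + ik k - 1) * Y <= 0)
  <-> (forall n, IZR (cprime a1 a2 (S (S (ik k) + 2 * n))) * IZR X
                 - IZR (cprime a1 a2 (S (ik k) + 2 * n)) * IZR Y <= 0)%R.
Proof.
  assert (Hik : (1 <= ik k)%nat) by (unfold ik; destruct (Nat.odd k); lia).
  assert (HR : forall a b, (IZR a * IZR X - IZR b * IZR Y <= 0)%R <-> a * X - b * Y <= 0).
  { intros a b. rewrite <- !mult_IZR, <- minus_IZR. split; [apply le_IZR | apply IZR_le]. }
  split.
  - intros H n. apply HR.
    replace (S (S (ik k) + 2 * n)) with (2 * S n + ik k)%nat by lia.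
    replace (S (ik k) + 2 * n)%nat with (2 * S n + ik k - 1)%nat by lia.
    apply H. lia.
  - intros H [|n] hl; [lia|]. apply HR.
    replace (2 * S n + ik k)%nat with (S (S (ik k) + 2 * n)) by lia.
    replace (2 * S n + ik k - 1)%nat with (S (ik k) + 2 * n)%nat by lia.
    apply H.
Qed.

Lemma gammaR_S_ik a1 a2 k : gammaR a1 a2 (S (ik k)) = gammaR a1 a2 (S k).
Proof.
  unfold gammaR, ik. rewrite (Nat.even_succ k).
  now destruct (Nat.odd k).
Qed.

Theorem proposition4p6 (a1 a2 k1 k2 : nat) (x : nat -> nat) (k : nat) :
  (1 <= a1)%nat -> (1 <= a2)%nat -> (4 < a1 * a2)%nat ->
  (0 < k1)%nat -> (0 < k2)%nat ->
  ((2 <= a1)%nat -> (2 <= a2)%nat ->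
     ((k2 <= k1)%nat /\ (k1 < (a1 - 1) * k2)%nat) \/
     ((k1 < k2)%nat /\ (k2 <= (a2 - 1) * k1)%nat)) ->
  (a1 = 1%nat -> (2 * k1 <= k2)%nat /\ (k2 <= (a2 - 2) * k1)%nat) ->
  (a2 = 1%nat -> (2 * k2 <= k1)%nat /\ (k1 <= (a1 - 2) * k2)%nat) ->
  ImPsi a1 a2 x ->
  (forall m, (1 <= m)%nat -> (Z.of_nat (x m) <= pseq a1 a2 k1 k2 m)%Z) ->
  (1 <= k)%nat ->
  ((forall l : nat, (1 <= l)%nat ->
      (cprime a1 a2 (2 * l + ik k) * (Z.of_nat (x (S k)) - pseq a1 a2 k1 k2 (S k))
       - cprime a1 a2 (2 * l + ik k - 1) * (Z.of_nat (x k) - pseq a1 a2 k1 k2 k) <= 0)%Z)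
   <->
   (gammaR a1 a2 (S k) * IZR (pseq a1 a2 k1 k2 (S k)) - IZR (pseq a1 a2 k1 k2 k)
    + INR (x k) - gammaR a1 a2 (S k) * INR (x (S k)) >= 0)%R).
Proof.
  intros ha1 ha2 ha12 _ _ _ _ _ _ hxp hk.
  set (X := (Z.of_nat (x (S k)) - pseq a1 a2 k1 k2 (S k))%Z).
  set (Y := (Z.of_nat (x k) - pseq a1 a2 k1 k2 k)%Z).
  assert (hX : (IZR X <= 0)%R) by (apply IZR_le; pose proof (hxp (S k)); lia).
  replace (gammaR a1 a2 (S k) * IZR (pseq a1 a2 k1 k2 (S k)) - IZR (pseq a1 a2 k1 k2 k)
           + INR (x k) - gammaR a1 a2 (S k) * INR (x (S k)))%R
    with (IZR Y - gammaR a1 a2 (S k) * IZR X)%R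
    by (unfold X, Y; rewrite !minus_IZR, <- !INR_IZR_INZ; ring).
  rewrite cprime_condition_reindex, cprime_combination_nonpos_iff, gammaR_S_ik by (auto; lia).
  lra.
Qed.
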